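(* Let $\mathcal{E}$ be the 2D Laplace equation $u_{xx}+u_{yy}=0$, with cotangent equation $\{u_{xx}+u_{yy}=0,\ p_{xx}+p_{yy}=0\}$, and consider the variational bivectors $B_0=p$, $B_1=p_{yy}$, $B_2=p_{xy}$, $B_3=p_y+2(xp_{xy}+yp_{yy})$, $B_4=p_x+2(yp_{xy}-xp_{yy})$, $B_5=u_{yy}p_y-u_{xy}p_x+2(u_yp_{yy}-u_xp_{xy})$, $B_6=u_{yy}p_x+u_{xy}p_y+2(u_yp_{xy}+u_xp_{yy})$, $B_7=(u_y+xu_{xy}+yu_{yy})p_x+(u_x+yu_{xy}-xu_{yy})p_y+2(yu_x-xu_y)p_{yy}+2(xu_x+yu_y)p_{xy}$, $B_8=-(u_x+yu_{xy}-xu_{yy})p_x+(u_y+xu_{xy}+yu_{yy})p_y+2(xu_x+yu_y)p_{yy}-2(yu_x-xu_y)p_{xy}$. Then $B_0,\dots,B_4$ are Poisson structures on $\mathcal{E}$, while $B_5,\dots,B_8$ are not Poisson structures; moreover, the Schouten brackets $[\![B_i,B_j]\!]$ are nonzero for all $5\le i\le j\le 8$.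
   Context: Setting: a scalar PDE $\mathcal{E}=\{F=0\}$ for one unknown $u(x^1,\dots,x^n)$, regarded as a submanifold of the infinite jet space with coordinates $x^i$, $u_\sigma$ ($\sigma$ a multi-index). $D_i$ are total derivatives, $D_\sigma$ their compositions. A $\mathcal{C}$-differential operator is an operator of the form $\sum_\sigma a^\sigma D_\sigma$ with smooth coefficients on the jet space (or on $\mathcal{E}$). The linearization is $\ell_F=\sum_\sigma \frac{\partial F}{\partial u_\sigma}D_\sigma$ and $\ell_{\mathcal{E}}$ its restriction to $\mathcal{E}$; $\Delta^*$ denotes the formal adjoint ($(\sum a^\sigma D_\sigma)^*=\sum(-1)^{|\sigma|}D_\sigma\circ a^\sigma$). The cotangent equation $\mathcal{T}^*\mathcal{E}$ is the system $\{F=0,\ \ell_F(p)=0\}$ (with all differential consequences), where $p$ is a new unknown of odd parity, so that all $p_\sigma$ are odd (anticommuting; in particular $p_\sigma p_\sigma=0$). Variational bivector: a $\mathcal{C}$-differential operator $H=\sum_\sigma h^\sigma D_\sigma$ on $\mathcal{E}$ such that (i) $\ell_{\mathcal{E}}(H_u)=0$ on $\mathcal{T}^*\mathcal{E}$, where $H_u=H(p)=\sum_\sigma h^\sigma p_\sigma$; and (ii) $H^*\circ\ell_{\mathcal{E}}^*=\ell_{\mathcal{E}}\circ H$ as operators on $\mathcal{E}$. Bivectors are identified with their functions $H_u$ (so ''$B=\sum B_\sigma p_\sigma$'' means $B=\sum B_\sigma D_\sigma$). Schouten bracket: for a bivector $H$, choose a bi-differential operator $\nabla$ in total derivatives on the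 jet space of $(u,p)$ with $\ell_F(H(p))-H^*(\ell_F(p))=\nabla(F,p)$ identically, and set $H_p=-\tfrac12\nabla^{*_1}(p,p)\big|_{\mathcal{T}^*\mathcal{E}}$ (even element quadratic in the $p_\sigma$; $\nabla^{*_1}$ is the adjoint in the first argument). Let $\mathrm{Ev}_{\phi(H)}=\sum_\sigma D_\sigma(H_u)\partial/\partial u_\sigma+D_\sigma(H_p)\partial/\partial p_\sigma$ (odd evolutionary derivation on $\mathcal{T}^*\mathcal{E}$). The Schouten bracket of bivectors $H,H'$ is $[\![H,H']\!]=\mathrm{Ev}_{\phi(H)}(H'_u)+\mathrm{Ev}_{\phi(H')}(H_u)$, a function on $\mathcal{T}^*\mathcal{E}$. $H$ is a Poisson structure if $[\![H,H]\!]=0$; two Poisson structures $H,H'$ are compatible if $[\![H,H']\!]=0$. *)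

From Stdlib Require Import Reals List Arith.
Import ListNotations.
Open Scope R_scope.

(* multi-index (i, j) = i derivatives in x, j derivatives in y *)
Definition mi := (nat * nat)%type.

Inductive evar := VX | VY | VU (s : mi).

Definition evar_eqb (a b : evar) : bool :=
  match a, b with
  | VX, VX => true
  | VY, VY => true
  | VU (i, j), VU (k, l) => Nat.eqb i k && Nat.eqb j l
  | _, _ => false
  end.

Inductive expr :=
| ECst (c : R)
| EVar (v : evar)
| EAdd (a b : expr)
| EMul (a b : expr).

Fixpoint eval (val : evar -> R) (e : expr) : R :=
  match e with
  | ECst c => c
  | EVar v => val v
  | EAdd a b => eval val a + eval val b
  | EMul a b => eval val a * eval val b
  end.

Fixpoint dpart (w : evar) (e : expr) : expr :=
  match e with
  | ECst _ => ECst 0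
  | EVar v => if evar_eqb v w then ECst 1 else ECst 0
  | EAdd a b => EAdd (dpart w a) (dpart w b)
  | EMul a b => EAdd (EMul (dpart w a) b) (EMul a (dpart w b))
  end.

Inductive dir := DX | DY.

Definition shift (d : dir) (s : mi) : mi :=
  match d with DX => (S (fst s), snd s) | DY => (fst s, S (snd s)) end.

Fixpoint tder (d : dir) (e : expr) : expr :=
  match e with
  | ECst _ => ECst 0
  | EVar VX => ECst (match d with DX => 1 | DY => 0 end)
  | EVar VY => ECst (match d with DX => 0 | DY => 1 end)
  | EVar (VU s) => EVar (VU (shift d s))
  | EAdd a b => EAdd (tder d a) (tder d b)
  | EMul a b => EAdd (EMul (tder d a) b) (EMul a (tder d b))
  end.

Definition tderm (s : mi) (e : expr) : expr :=
  Nat.iter (fst s) (tder DX) (Nat.iter (snd s) (tder DY) e).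

(* odd elements linear in p:  sum_k e_k p_{s_k} *)
Definition lin := list (expr * mi).
(* even elements quadratic in p:  sum_k e_k p_{s_k} p_{t_k}  (ordered product) *)
Definition quad := list (expr * mi * mi).

Definition lin_der (d : dir) (l : lin) : lin :=
  flat_map (fun '(e, s) => [(tder d e, s); (e, shift d s)]) l.
Definition quad_der (d : dir) (q : quad) : quad :=
  flat_map (fun '(e, s, t) =>
    [(tder d e, s, t); (e, shift d s, t); (e, s, shift d t)]) q.
Definition lin_derm (s : mi) (l : lin) : lin :=
  Nat.iter (fst s) (lin_der DX) (Nat.iter (snd s) (lin_der DY) l).
Definition quad_derm (s : mi) (q : quad) : quad :=
  Nat.iter (fst s) (quad_der DX) (Nat.iter (snd s) (quad_der DY) q).

Definition lin_scale (c : expr) (l : lin) : lin :=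
  map (fun '(e, s) => (EMul c e, s)) l.
Definition quad_scale (c : expr) (q : quad) : quad :=
  map (fun '(e, s, t) => (EMul c e, s, t)) q.
Definition lin_sub (l1 l2 : lin) : lin := l1 ++ lin_scale (ECst (-1)) l2.
(* product of two odd linear elements (left factor first) *)
Definition lin_mul (l1 l2 : lin) : quad :=
  flat_map (fun '(e1, s1) => map (fun '(e2, s2) => (EMul e1 e2, s1, s2)) l2) l1.

(* Semantics.  Even coordinates are evaluated by a valuation; the odd       *)
(* variables p_sigma generate a Grassmann algebra, whose degree-1 part is   *)
(* faithfully represented by linear forms and whose degree-2 part by        *)
(* alternating bilinear forms (p_s p_t |-> a_s b_t - a_t b_s).              *)
Definition lin_eval (val : evar -> R) (a : mi -> R) (l : lin) : R :=
  fold_right (fun '(e, s) acc => eval val e * a s + acc) 0 l.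
Definition quad_eval (val : evar -> R) (a b : mi -> R) (q : quad) : R :=
  fold_right (fun '(e, s, t) acc => eval val e * (a s * b t - a t * b s) + acc) 0 q.

Definition lin_eq (l1 l2 : lin) : Prop :=
  forall val a, lin_eval val a l1 = lin_eval val a l2.

(* Restriction to the equation.  On E = {u_xx + u_yy = 0} (resp. on        *)
(* T*E, where also p_xx + p_yy = 0) the internal coordinates are x, y,      *)
(* u_(i,j), p_(i,j) with i <= 1, and u_(i,j) = (-1)^(i/2) u_(i mod 2, j + 2(i/2)). *)
Definition red_mi (s : mi) : mi := (fst s mod 2, snd s + 2 * (fst s / 2))%nat.
Definition red_sign (s : mi) : R := if Nat.even (fst s / 2) then 1 else -1.

Fixpoint red_expr (e : expr) : expr :=
  match e with
  | ECst c => ECst c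
  | EVar (VU s) => EMul (ECst (red_sign s)) (EVar (VU (red_mi s)))
  | EVar v => EVar v
  | EAdd a b => EAdd (red_expr a) (red_expr b)
  | EMul a b => EMul (red_expr a) (red_expr b)
  end.

(* restriction to E (only u is constrained; p is free) *)
Definition red_lin_E (l : lin) : lin := map (fun '(e, s) => (red_expr e, s)) l.
Definition red_lin_TE (l : lin) : lin :=
  map (fun '(e, s) => (EMul (ECst (red_sign s)) (red_expr e), red_mi s)) l.
Definition red_quad_TE (q : quad) : quad :=
  map (fun '(e, s, t) =>
    (EMul (ECst (red_sign s * red_sign t)) (red_expr e), red_mi s, red_mi t)) q.

(* vanishing on T*E (a reduced element is a function of the free internal  *)
(* coordinates of T*E) *)
Definition lin_zero_TE (l : lin) : Prop :=
  forall val a, lin_eval val a (red_lin_TE l) = 0.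
Definition quad_zero_TE (q : quad) : Prop :=
  forall val a b, quad_eval val a b (red_quad_TE q) = 0.

Definition mis (n : nat) : list mi := list_prod (seq 0 n) (seq 0 n).

Fixpoint ebound (e : expr) : nat :=
  match e with
  | ECst _ => 0
  | EVar (VU (i, j)) => S (Nat.max i j)
  | EVar _ => 0
  | EAdd a b | EMul a b => Nat.max (ebound a) (ebound b)
  end.

(* C-differential operators  sum_k h_k D_{s_k} *)
Definition op := list (expr * mi).

Definition sgn (s : mi) : R := if Nat.even (fst s + snd s) then 1 else -1.

Definition op_app (H : op) (w : lin) : lin :=
  flat_map (fun '(h, s) => lin_scale h (lin_derm s w)) H.
Definition op_adj_app (H : op) (w : lin) : lin :=
  flat_map (fun '(h, s) => lin_scale (ECst (sgn s)) (lin_derm s (lin_scale h w))) H.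

Definition pvar : lin := [(ECst 1, (0, 0)%nat)].
Definition Hu (H : op) : lin := op_app H pvar.

Definition lapF : expr := EAdd (EVar (VU (2, 0)%nat)) (EVar (VU (0, 2)%nat)).

Definition ellF (F : expr) : op :=
  map (fun s => (dpart (VU s) F, s)) (mis (ebound F)).

(* variational bivector: (i) l_E(H_u) = 0 on T*E;                          *)
(* (ii) H^* o l_E^* = l_E o H as operators on E (tested on a free odd p).   *)
Definition variational_bivector (H : op) : Prop :=
  lin_zero_TE (op_app (ellF lapF) (Hu H)) /\
  lin_eq (red_lin_E (op_adj_app H (op_adj_app (ellF lapF) pvar)))
         (red_lin_E (op_app (ellF lapF) (op_app H pvar))).

(* bi-differential operators nabla(a, b) = sum_k c_k D_{s_k}(a) D_{t_k}(b), *)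
(* coefficients c_k functions of (x, y, u_sigma)                           *)
Definition bidiff := list (expr * mi * mi).

Definition nabla_Fp (N : bidiff) (F : expr) : lin :=
  map (fun '(c, s, t) => (EMul c (tderm s F), t)) N.

Definition nabla_ok (H : op) (N : bidiff) : Prop :=
  lin_eq (lin_sub (op_app (ellF lapF) (Hu H))
                  (op_adj_app H (op_app (ellF lapF) pvar)))
         (nabla_Fp N lapF).

(* H_p = -1/2 nabla^{*1}(p, p) restricted to T*E, where                    *)
(* nabla^{*1}(a, b) = sum_k (-1)^|s_k| D_{s_k}(c_k a D_{t_k} b)             *)
Definition Hp (N : bidiff) : quad :=
  quad_scale (ECst (- (1 / 2)))
    (red_quad_TE
       (flat_map (fun '(c, s, t) =>
          quad_scale (ECst (sgn s)) (quad_derm s [(c, (0, 0)%nat, t)])) N)).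

(* Ev_{phi(H)}(G) on T*E, for G odd linear:                                *)
(* Ev(e p_s) = (sum_t D_t(H_u) de/du_t) p_s + e D_s(H_p)                   *)
Definition ev_apply (H : op) (N : bidiff) (G : lin) : quad :=
  flat_map (fun '(e, s) =>
      flat_map (fun t =>
         lin_mul (lin_scale (dpart (VU t) e) (red_lin_TE (lin_derm t (Hu H))))
                 [(ECst 1, s)]) (mis (ebound e))
      ++ quad_scale e (red_quad_TE (quad_derm s (Hp N))))
    (red_lin_TE G).

Definition schouten (H H' : op) (N N' : bidiff) : quad :=
  ev_apply H N (Hu H') ++ ev_apply H' N' (Hu H).

Definition bracket_zero (H H' : op) : Prop :=
  (exists N, nabla_ok H N) /\ (exists N', nabla_ok H' N') /\
  forall N N', nabla_ok H N -> nabla_ok H' N' -> quad_zero_TE (schouten H H' N N').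

Definition bracket_nonzero (H H' : op) : Prop :=
  (exists N, nabla_ok H N) /\ (exists N', nabla_ok H' N') /\
  forall N N', nabla_ok H N -> nabla_ok H' N' -> ~ quad_zero_TE (schouten H H' N N').

Definition poisson (H : op) : Prop := variational_bivector H /\ bracket_zero H H.

Definition ex : expr := EVar VX.
Definition ey : expr := EVar VY.
Definition eu (i j : nat) : expr := EVar (VU (i, j)).
Definition ec (c : R) : expr := ECst c.
Notation "a +e b" := (EAdd a b) (at level 50, left associativity).
Notation "a *e b" := (EMul a b) (at level 40, left associativity).

Definition ux := eu 1 0.
Definition uy := eu 0 1.
Definition uxy := eu 1 1.
Definition uyy := eu 0 2.

Definition B (n : nat) : op :=
  match n with
  | 0 => [(ec 1, (0, 0))]
  | 1 => [(ec 1, (0, 2))]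
  | 2 => [(ec 1, (1, 1))]
  | 3 => [(ec 1, (0, 1)); (ec 2 *e ex, (1, 1)); (ec 2 *e ey, (0, 2))]
  | 4 => [(ec 1, (1, 0)); (ec 2 *e ey, (1, 1)); (ec (-2) *e ex, (0, 2))]
  | 5 => [(uyy, (0, 1)); (ec (-1) *e uxy, (1, 0));
          (ec 2 *e uy, (0, 2)); (ec (-2) *e ux, (1, 1))]
  | 6 => [(uyy, (1, 0)); (uxy, (0, 1));
          (ec 2 *e uy, (1, 1)); (ec 2 *e ux, (0, 2))]
  | 7 => [(uy +e ex *e uxy +e ey *e uyy, (1, 0));
          (ux +e ey *e uxy +e ec (-1) *e ex *e uyy, (0, 1));
          (ec 2 *e (ey *e ux +e ec (-1) *e ex *e uy), (0, 2));
          (ec 2 *e (ex *e ux +e ey *e uy), (1, 1))]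
  | 8 => [(ec (-1) *e (ux +e ey *e uxy +e ec (-1) *e ex *e uyy), (1, 0));
          (uy +e ex *e uxy +e ey *e uyy, (0, 1));
          (ec 2 *e (ex *e ux +e ey *e uy), (0, 2));
          (ec (-2) *e (ey *e ux +e ec (-1) *e ex *e uy), (1, 1))]
  | _ => []
  end%nat.

(* All the objects involved are explicit, so the theorem reduces to finitely many
   polynomial identities and non-identities on E and T*E.  These are decided by
   reflection: the computation is replayed on a copy of the calculus with rational
   constants and the result is normalised as a polynomial in the coordinates.

   The one conceptual point is that [[B_i, B_j]] does not depend on the choice of ∇.
   If ∇_1(F, p) = ∇_2(F, p) identically, then evaluating along a line through a point
   of E in the direction of a jet w with D_s(F)(w) = δ_{s s0} shows that ∇_1 and ∇_2
   have the same coefficient in front of D_{s0}(F) D_t(p) on E.  Since E and T*E are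
   linear and invariant under shifting multi-indices, the line through a point of T*E
   in the direction of a total derivative stays in T*E, so identities on T*E survive
   total differentiation; hence H_p, and with it the bracket, is independent of ∇. *)

From Pilot Require Import Defs.
From Stdlib Require Import Reals List QArith Qreals Lra Lia Permutation
  FunctionalExtensionality.
Import ListNotations.
Open Scope R_scope.

(** * A rational copy of the calculus *)

(* Real constants do not compute, so the symbolic checks are run on this copy of
   the operations of [Defs], which has rational constants, and transported back
   along the representation relation [rep_expr]. *)

Inductive qexpr := QC (c : Q) | QV (v : evar) | QA (a b : qexpr) | QM (a b : qexpr).

Fixpoint qdpart (w : evar) (e : qexpr) : qexpr :=
  match e with
  | QC _ => QC 0
  | QV v => if evar_eqb v w then QC 1 else QC 0
  | QA a b => QA (qdpart w a) (qdpart w b)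
  | QM a b => QA (QM (qdpart w a) b) (QM a (qdpart w b))
  end.

Fixpoint qtder (d : dir) (e : qexpr) : qexpr :=
  match e with
  | QC _ => QC 0
  | QV VX => QC (match d with DX => 1 | DY => 0 end)
  | QV VY => QC (match d with DX => 0 | DY => 1 end)
  | QV (VU s) => QV (VU (shift d s))
  | QA a b => QA (qtder d a) (qtder d b)
  | QM a b => QA (QM (qtder d a) b) (QM a (qtder d b))
  end.

Definition qtderm (s : mi) (e : qexpr) : qexpr :=
  Nat.iter (fst s) (qtder DX) (Nat.iter (snd s) (qtder DY) e).

Definition qlin := list (qexpr * mi).
Definition qquad := list (qexpr * mi * mi).
Definition qop := qlin.
Definition qbidiff := qquad.

Definition qlin_der (d : dir) (l : qlin) : qlin :=
  flat_map (fun '(e, s) => [(qtder d e, s); (e, shift d s)]) l.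
Definition qquad_der (d : dir) (q : qquad) : qquad :=
  flat_map (fun '(e, s, t) =>
    [(qtder d e, s, t); (e, shift d s, t); (e, s, shift d t)]) q.
Definition qlin_derm (s : mi) (l : qlin) : qlin :=
  Nat.iter (fst s) (qlin_der DX) (Nat.iter (snd s) (qlin_der DY) l).
Definition qquad_derm (s : mi) (q : qquad) : qquad :=
  Nat.iter (fst s) (qquad_der DX) (Nat.iter (snd s) (qquad_der DY) q).
Definition qlin_scale (c : qexpr) (l : qlin) : qlin :=
  map (fun '(e, s) => (QM c e, s)) l.
Definition qquad_scale (c : qexpr) (q : qquad) : qquad :=
  map (fun '(e, s, t) => (QM c e, s, t)) q.
Definition qlin_sub (l1 l2 : qlin) : qlin := l1 ++ qlin_scale (QC (-1)) l2.
Definition qlin_mul (l1 l2 : qlin) : qquad :=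
  flat_map (fun '(e1, s1) => map (fun '(e2, s2) => (QM e1 e2, s1, s2)) l2) l1.

Definition qred_sign (s : mi) : Q := if Nat.even (fst s / 2) then 1 else -1.
Definition qsgn (s : mi) : Q := if Nat.even (fst s + snd s) then 1 else -1.

Fixpoint qred_expr (e : qexpr) : qexpr :=
  match e with
  | QC c => QC c
  | QV (VU s) => QM (QC (qred_sign s)) (QV (VU (red_mi s)))
  | QV v => QV v
  | QA a b => QA (qred_expr a) (qred_expr b)
  | QM a b => QM (qred_expr a) (qred_expr b)
  end.
Definition qred_lin_E (l : qlin) : qlin := map (fun '(e, s) => (qred_expr e, s)) l.
Definition qred_lin_TE (l : qlin) : qlin :=
  map (fun '(e, s) => (QM (QC (qred_sign s)) (qred_expr e), red_mi s)) l.
Definition qred_quad_TE (q : qquad) : qquad :=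
  map (fun '(e, s, t) =>
    (QM (QC (qred_sign s * qred_sign t)) (qred_expr e), red_mi s, red_mi t)) q.

Fixpoint qebound (e : qexpr) : nat :=
  match e with
  | QV (VU (i, j)) => S (Nat.max i j)
  | QC _ | QV _ => 0
  | QA a b | QM a b => Nat.max (qebound a) (qebound b)
  end.

Definition qop_app (H : qop) (w : qlin) : qlin :=
  flat_map (fun '(h, s) => qlin_scale h (qlin_derm s w)) H.
Definition qop_adj_app (H : qop) (w : qlin) : qlin :=
  flat_map (fun '(h, s) => qlin_scale (QC (qsgn s)) (qlin_derm s (qlin_scale h w))) H.
Definition qpvar : qlin := [(QC 1, (0, 0)%nat)].
Definition qHu (H : qop) : qlin := qop_app H qpvar.
Definition qlapF : qexpr := QA (QV (VU (2, 0)%nat)) (QV (VU (0, 2)%nat)).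
Definition qellF (F : qexpr) : qop :=
  map (fun s => (qdpart (VU s) F, s)) (mis (qebound F)).
Definition qnabla_Fp (N : qbidiff) (F : qexpr) : qlin :=
  map (fun '(c, s, t) => (QM c (qtderm s F), t)) N.
Definition qHp (N : qbidiff) : qquad :=
  qquad_scale (QC (- (1 # 2)))
    (qred_quad_TE
       (flat_map (fun '(c, s, t) =>
          qquad_scale (QC (qsgn s)) (qquad_derm s [(c, (0, 0)%nat, t)])) N)).
Definition qev_apply (H : qop) (N : qbidiff) (G : qlin) : qquad :=
  flat_map (fun '(e, s) =>
      flat_map (fun t =>
         qlin_mul (qlin_scale (qdpart (VU t) e) (qred_lin_TE (qlin_derm t (qHu H))))
                  [(QC 1, s)]) (mis (qebound e))
      ++ qquad_scale e (qred_quad_TE (qquad_derm s (qHp N))))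
    (qred_lin_TE G).
Definition qschouten (H H' : qop) (N N' : qbidiff) : qquad :=
  qev_apply H N (qHu H') ++ qev_apply H' N' (qHu H).

Fixpoint rep_expr (q : qexpr) (e : expr) : Prop :=
  match q, e with
  | QC c, ECst c' => Q2R c = c'
  | QV v, EVar v' => v = v'
  | QA a b, EAdd a' b' | QM a b, EMul a' b' => rep_expr a a' /\ rep_expr b b'
  | _, _ => False
  end.
Definition rep_lin : qlin -> lin -> Prop :=
  Forall2 (fun x y => rep_expr (fst x) (fst y) /\ snd x = snd y).
Definition rep_quad : qquad -> quad -> Prop :=
  Forall2 (fun x y => rep_expr (fst (fst x)) (fst (fst y)) /\
                      snd (fst x) = snd (fst y) /\ snd x = snd y).

Lemma Forall2_map_map {A B C D} (P : A -> B -> Prop) (P' : C -> D -> Prop)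
    (f : A -> C) (g : B -> D) l m :
  Forall2 P l m -> (forall x y, P x y -> P' (f x) (g y)) ->
  Forall2 P' (map f l) (map g m).
Proof. intros H Hfg; induction H; simpl; auto. Qed.

Lemma Forall2_flat_map_flat_map {A B C D} (P : A -> B -> Prop) (P' : C -> D -> Prop)
    (f : A -> list C) (g : B -> list D) l m :
  Forall2 P l m -> (forall x y, P x y -> Forall2 P' (f x) (g y)) ->
  Forall2 P' (flat_map f l) (flat_map g m).
Proof. intros H Hfg; induction H; simpl; auto using Forall2_app. Qed.

Lemma Forall2_eq_refl {A} (l : list A) : Forall2 eq l l.
Proof. induction l; auto. Qed.

Lemma rel_iter {A B} (P : A -> B -> Prop) (f : A -> A) (g : B -> B) n x y :
  (forall x y, P x y -> P (f x) (g y)) -> P x y -> P (Nat.iter n f x) (Nat.iter n g y).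
Proof. intros Hfg Hxy; induction n; simpl; auto. Qed.

Lemma Q2R_zero : Q2R 0 = 0. Proof. unfold Q2R; simpl; lra. Qed.
Lemma Q2R_one : Q2R 1 = 1. Proof. unfold Q2R; simpl; lra. Qed.
Lemma Q2R_minus_one : Q2R (-1) = -1. Proof. unfold Q2R; simpl; lra. Qed.

Lemma Q2R_red x : Q2R (Qred x) = Q2R x.
Proof. apply Qeq_eqR, Qred_correct. Qed.

Lemma Q2R_red_sign s : Q2R (qred_sign s) = red_sign s.
Proof.
  unfold qred_sign, red_sign; destruct (Nat.even _); auto using Q2R_one, Q2R_minus_one.
Qed.

Lemma Q2R_sgn s : Q2R (qsgn s) = sgn s.
Proof. unfold qsgn, sgn; destruct (Nat.even _); auto using Q2R_one, Q2R_minus_one. Qed.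

Lemma rep_dpart w q e : rep_expr q e -> rep_expr (qdpart w q) (dpart w e).
Proof.
  revert e; induction q; destruct e; simpl; try tauto; intros Hr.
  - apply Q2R_zero.
  - subst; destruct (evar_eqb v0 w); [apply Q2R_one | apply Q2R_zero].
  - destruct Hr; split; auto.
  - destruct Hr; repeat split; auto.
Qed.

Lemma rep_tder d q e : rep_expr q e -> rep_expr (qtder d q) (tder d e).
Proof.
  revert e; induction q; destruct e; simpl; try tauto; intros Hr.
  - apply Q2R_zero.
  - subst; destruct v0; simpl; auto; destruct d; auto using Q2R_zero, Q2R_one.
  - destruct Hr; split; auto.
  - destruct Hr; repeat split; auto.
Qed.

Lemma rep_tderm s q e : rep_expr q e -> rep_expr (qtderm s q) (tderm s e).
Proof. intros; unfold qtderm, tderm; do 2 (apply rel_iter; auto using rep_tder). Qed.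

Lemma rep_red_expr q e : rep_expr q e -> rep_expr (qred_expr q) (red_expr e).
Proof.
  revert e; induction q; destruct e; simpl; try tauto; intros Hr.
  - subst; destruct v0; simpl; auto using Q2R_red_sign.
  - destruct Hr; split; auto.
  - destruct Hr; split; auto.
Qed.

Lemma rep_ebound q e : rep_expr q e -> qebound q = ebound e.
Proof.
  revert e; induction q; destruct e; simpl; try tauto; intros Hr.
  - subst; destruct v0 as [| |[]]; reflexivity.
  - destruct Hr; f_equal; auto.
  - destruct Hr; f_equal; auto.
Qed.

Lemma rep_lin_der d lq l : rep_lin lq l -> rep_lin (qlin_der d lq) (lin_der d l).
Proof.
  intros Hr; apply (Forall2_flat_map_flat_map _ _ _ _ _ _ Hr).
  intros [e1 s1] [e2 s2] [He Hs]; simpl in *; subst.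
  repeat constructor; simpl; auto using rep_tder.
Qed.

Lemma rep_quad_der d lq l : rep_quad lq l -> rep_quad (qquad_der d lq) (quad_der d l).
Proof.
  intros Hr; apply (Forall2_flat_map_flat_map _ _ _ _ _ _ Hr).
  intros [[e1 s1] t1] [[e2 s2] t2] [He [Hs Ht]]; simpl in *; subst.
  repeat constructor; simpl; auto using rep_tder.
Qed.

Lemma rep_lin_derm s lq l : rep_lin lq l -> rep_lin (qlin_derm s lq) (lin_derm s l).
Proof.
  intros; unfold qlin_derm, lin_derm; do 2 (apply rel_iter; auto using rep_lin_der).
Qed.

Lemma rep_quad_derm s lq l : rep_quad lq l -> rep_quad (qquad_derm s lq) (quad_derm s l).
Proof.
  intros; unfold qquad_derm, quad_derm; do 2 (apply rel_iter; auto using rep_quad_der).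
Qed.

Lemma rep_lin_scale c c' lq l :
  rep_expr c c' -> rep_lin lq l -> rep_lin (qlin_scale c lq) (lin_scale c' l).
Proof.
  intros Hc Hr; apply (Forall2_map_map _ _ _ _ _ _ Hr).
  intros [e1 s1] [e2 s2] [He Hs]; simpl in *; auto.
Qed.

Lemma rep_quad_scale c c' lq l :
  rep_expr c c' -> rep_quad lq l -> rep_quad (qquad_scale c lq) (quad_scale c' l).
Proof.
  intros Hc Hr; apply (Forall2_map_map _ _ _ _ _ _ Hr).
  intros [[e1 s1] t1] [[e2 s2] t2] [He [Hs Ht]]; simpl in *; auto.
Qed.

Lemma rep_lin_sub l1 l2 m1 m2 :
  rep_lin l1 m1 -> rep_lin l2 m2 -> rep_lin (qlin_sub l1 l2) (lin_sub m1 m2).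
Proof.
  intros; apply Forall2_app; [assumption |].
  apply rep_lin_scale; [apply Q2R_minus_one | assumption].
Qed.

Lemma rep_lin_mul l1 l2 m1 m2 :
  rep_lin l1 m1 -> rep_lin l2 m2 -> rep_quad (qlin_mul l1 l2) (lin_mul m1 m2).
Proof.
  intros H1 H2; apply (Forall2_flat_map_flat_map _ _ _ _ _ _ H1).
  intros [e1 s1] [f1 u1] [He Hs]; simpl in *; subst.
  apply (Forall2_map_map _ _ _ _ _ _ H2).
  intros [e2 s2] [f2 u2] [He' Hs']; simpl in *; auto.
Qed.

Lemma rep_red_lin_E lq l : rep_lin lq l -> rep_lin (qred_lin_E lq) (red_lin_E l).
Proof.
  intros Hr; apply (Forall2_map_map _ _ _ _ _ _ Hr).
  intros [e1 s1] [e2 s2] [He Hs]; simpl in *; auto using rep_red_expr.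
Qed.

Lemma rep_red_lin_TE lq l : rep_lin lq l -> rep_lin (qred_lin_TE lq) (red_lin_TE l).
Proof.
  intros Hr; apply (Forall2_map_map _ _ _ _ _ _ Hr).
  intros [e1 s1] [e2 s2] [He Hs]; simpl in *; subst.
  auto using rep_red_expr, Q2R_red_sign.
Qed.

Lemma rep_red_quad_TE lq l : rep_quad lq l -> rep_quad (qred_quad_TE lq) (red_quad_TE l).
Proof.
  intros Hr; apply (Forall2_map_map _ _ _ _ _ _ Hr).
  intros [[e1 s1] t1] [[e2 s2] t2] [He [Hs Ht]]; simpl in *; subst.
  rewrite Q2R_mult, !Q2R_red_sign; auto using rep_red_expr.
Qed.

Lemma rep_op_app h H lq l :
  rep_lin h H -> rep_lin lq l -> rep_lin (qop_app h lq) (op_app H l).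
Proof.
  intros H1 H2; apply (Forall2_flat_map_flat_map _ _ _ _ _ _ H1).
  intros [e1 s1] [e2 s2] [He Hs]; simpl in *; subst.
  apply rep_lin_scale; auto using rep_lin_derm.
Qed.

Lemma rep_op_adj_app h H lq l :
  rep_lin h H -> rep_lin lq l -> rep_lin (qop_adj_app h lq) (op_adj_app H l).
Proof.
  intros H1 H2; apply (Forall2_flat_map_flat_map _ _ _ _ _ _ H1).
  intros [e1 s1] [e2 s2] [He Hs]; simpl in *; subst.
  apply rep_lin_scale; [apply Q2R_sgn |].
  apply rep_lin_derm, rep_lin_scale; auto.
Qed.

Lemma rep_pvar : rep_lin qpvar pvar.
Proof. repeat constructor; apply Q2R_one. Qed.

Lemma rep_Hu h H : rep_lin h H -> rep_lin (qHu h) (Hu H).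
Proof. intros; apply rep_op_app; auto using rep_pvar. Qed.

Lemma rep_ellF_lapF : rep_lin (qellF qlapF) (ellF lapF).
Proof.
  unfold qellF, ellF; rewrite (rep_ebound qlapF lapF) by (simpl; auto).
  apply (Forall2_map_map eq); [apply Forall2_eq_refl |].
  intros s ? <-; split; [apply rep_dpart; simpl; auto | reflexivity].
Qed.

Lemma rep_nabla_Fp_lapF nq n :
  rep_quad nq n -> rep_lin (qnabla_Fp nq qlapF) (nabla_Fp n lapF).
Proof.
  intros Hr; apply (Forall2_map_map _ _ _ _ _ _ Hr).
  intros [[e1 s1] t1] [[e2 s2] t2] [He [Hs Ht]]; simpl in *; subst.
  split; auto. split; auto. apply rep_tderm; simpl; auto.
Qed.

Lemma rep_Hp nq n : rep_quad nq n -> rep_quad (qHp nq) (Hp n).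
Proof.
  intros Hr; apply rep_quad_scale.
  - simpl; unfold Q2R; simpl; lra.
  - apply rep_red_quad_TE, (Forall2_flat_map_flat_map _ _ _ _ _ _ Hr).
    intros [[e1 s1] t1] [[e2 s2] t2] [He [Hs Ht]]; simpl in *; subst.
    apply rep_quad_scale; [apply Q2R_sgn |].
    apply rep_quad_derm; repeat constructor; auto.
Qed.

Lemma rep_ev_apply h H nq n gq g :
  rep_lin h H -> rep_quad nq n -> rep_lin gq g ->
  rep_quad (qev_apply h nq gq) (ev_apply H n g).
Proof.
  intros H1 H2 H3; apply (Forall2_flat_map_flat_map _ _ _ _ _ _ (rep_red_lin_TE _ _ H3)).
  intros [e1 s1] [e2 s2] [He Hs]; simpl in *; subst.
  apply Forall2_app.
  - rewrite (rep_ebound _ _ He).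
    apply (Forall2_flat_map_flat_map eq); [apply Forall2_eq_refl |]; intros t ? <-.
    apply rep_lin_mul.
    + apply rep_lin_scale; [apply rep_dpart; assumption |].
      apply rep_red_lin_TE, rep_lin_derm, rep_Hu, H1.
    + repeat constructor; apply Q2R_one.
  - apply rep_quad_scale; [assumption |].
    apply rep_red_quad_TE, rep_quad_derm, rep_Hp, H2.
Qed.

Lemma rep_schouten h h' H H' nq nq' n n' :
  rep_lin h H -> rep_lin h' H' -> rep_quad nq n -> rep_quad nq' n' ->
  rep_quad (qschouten h h' nq nq') (schouten H H' n n').
Proof. intros; apply Forall2_app; apply rep_ev_apply; auto using rep_Hu. Qed.

(** * Deciding polynomial identities over Q *)

Definition evar_eq_dec : forall v w : evar, {v = w} + {v <> w}.
Proof. repeat decide equality. Defined.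

Inductive atom := AV (v : evar) | AA (s : mi) | AB (s : mi).

Definition atom_eq_dec : forall x y : atom, {x = y} + {x <> y}.
Proof. decide equality; first [apply evar_eq_dec | repeat decide equality]. Defined.

Definition atom_eval (val : evar -> R) (a b : mi -> R) (x : atom) : R :=
  match x with AV v => val v | AA s => a s | AB s => b s end.

Definition monom := list atom.
Definition poly := list (Q * monom).

(* Zero terms are dropped as they arise, which keeps the expansions small. *)
Definition poly_mul_monom (c : Q) (m : monom) (q : poly) : poly :=
  flat_map (fun '(c', m') =>
    let cc := Qmult' c c' in if Qeq_bool cc 0 then [] else [(cc, m ++ m')]) q.
Definition poly_mul (p q : poly) : poly :=
  flat_map (fun '(c, m) => poly_mul_monom c m q) p.
Definition poly_opp (p : poly) : poly := map (fun '(c, m) => (Qopp c, m)) p.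

Fixpoint poly_of_qexpr (e : qexpr) : poly :=
  match e with
  | QC c => if Qeq_bool c 0 then [] else [(c, [])]
  | QV v => [(1%Q, [AV v])]
  | QA a b => poly_of_qexpr a ++ poly_of_qexpr b
  | QM a b => poly_mul (poly_of_qexpr a) (poly_of_qexpr b)
  end.

Definition poly_of_qlin (l : qlin) : poly :=
  flat_map (fun '(e, s) => poly_mul (poly_of_qexpr e) [(1%Q, [AA s])]) l.

Definition same_monom (m m' : monom) : bool :=
  forallb (fun x => Nat.eqb (count_occ atom_eq_dec m x) (count_occ atom_eq_dec m' x))
    (m ++ m').

Lemma same_monom_perm m m' : same_monom m m' = true -> Permutation m m'.
Proof.
  intros Hs; apply (Permutation_count_occ atom_eq_dec); intros x.
  unfold same_monom in Hs; rewrite forallb_forall in Hs.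
  destruct (in_dec atom_eq_dec x (m ++ m')) as [Hin | Hout].
  - apply Nat.eqb_eq, Hs, Hin.
  - rewrite in_app_iff in Hout.
    rewrite !(proj1 (count_occ_not_In _ _ _)); tauto.
Qed.

Definition coef_sum (p : poly) : Q := fold_right (fun t acc => Qplus (fst t) acc) 0%Q p.

Fixpoint cancels (fuel : nat) (p : poly) : bool :=
  match fuel, p with
  | _, [] => true
  | O, _ :: _ => false
  | S f, (c, m) :: r =>
      Qeq_bool (c + coef_sum (filter (fun t => same_monom m (snd t)) r)) 0 &&
      cancels f (filter (fun t => negb (same_monom m (snd t))) r)
  end.

Definition poly_is_zero (p : poly) : bool := cancels (length p) p.

Section PolyEval.

Variable env : atom -> R.

Fixpoint monom_eval (m : monom) : R :=
  match m with [] => 1 | x :: m => env x * monom_eval m end.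
Fixpoint poly_eval (p : poly) : R :=
  match p with [] => 0 | (c, m) :: p => Q2R c * monom_eval m + poly_eval p end.

Lemma monom_eval_app m1 m2 : monom_eval (m1 ++ m2) = monom_eval m1 * monom_eval m2.
Proof. induction m1; simpl; [ring | rewrite IHm1; ring]. Qed.

Lemma poly_eval_app p q : poly_eval (p ++ q) = poly_eval p + poly_eval q.
Proof. induction p as [|[c m] p IH]; simpl; [ring | rewrite IH; ring]. Qed.

Lemma poly_eval_mul_monom c m q :
  poly_eval (poly_mul_monom c m q) = Q2R c * monom_eval m * poly_eval q.
Proof.
  induction q as [|[c' m'] q IH]; simpl; [ring |].
  rewrite poly_eval_app, IH; destruct (Qeq_bool (Qmult' c c') 0) eqn:Hz; simpl.
  - apply Qeq_bool_eq, Qeq_eqR in Hz; unfold Qmult' in Hz.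
    rewrite Q2R_red, Q2R_mult, Q2R_zero in Hz.
    transitivity ((Q2R c * Q2R c') * monom_eval m * monom_eval m' +
                  Q2R c * monom_eval m * poly_eval q); [rewrite Hz |]; ring.
  - unfold Qmult'; rewrite Q2R_red, Q2R_mult, monom_eval_app; ring.
Qed.

Lemma poly_eval_mul p q : poly_eval (poly_mul p q) = poly_eval p * poly_eval q.
Proof.
  induction p as [|[c m] p IH]; simpl; [ring |].
  rewrite poly_eval_app, IH, poly_eval_mul_monom; ring.
Qed.

Lemma poly_eval_opp p : poly_eval (poly_opp p) = - poly_eval p.
Proof. induction p as [|[c m] p IH]; simpl; [ring |]. rewrite IH, Q2R_opp; ring. Qed.

Lemma monom_eval_perm m m' : Permutation m m' -> monom_eval m = monom_eval m'.
Proof. induction 1; simpl; try congruence; ring. Qed.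

Lemma poly_eval_split f p :
  poly_eval p = poly_eval (filter f p) + poly_eval (filter (fun t => negb (f t)) p).
Proof. induction p as [|[c m] p IH]; simpl; [ring |]; destruct (f (c, m)); simpl; lra. Qed.

Lemma poly_eval_same_monom m p :
  poly_eval (filter (fun t => same_monom m (snd t)) p) =
  Q2R (coef_sum (filter (fun t => same_monom m (snd t)) p)) * monom_eval m.
Proof.
  induction p as [|[c m'] p IH]; simpl; [rewrite Q2R_zero; ring |].
  destruct (same_monom m m') eqn:E; simpl; auto.
  rewrite IH, Q2R_plus, (monom_eval_perm _ _ (same_monom_perm _ _ E)); ring.
Qed.

Lemma cancels_sound fuel p : cancels fuel p = true -> poly_eval p = 0.
Proof.
  revert p; induction fuel as [|fuel IH]; intros [|[c m] r] Hc; simpl in *;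
    try discriminate; auto.
  apply andb_true_iff in Hc as [Hsum Hrest].
  rewrite (poly_eval_split (fun t => same_monom m (snd t)) r), poly_eval_same_monom,
    (IH _ Hrest).
  apply Qeq_bool_eq, Qeq_eqR in Hsum; rewrite Q2R_plus, Q2R_zero in Hsum.
  replace (Q2R c) with (- Q2R (coef_sum (filter (fun t => same_monom m (snd t)) r)))
    by lra.
  ring.
Qed.

Lemma poly_is_zero_sound p : poly_is_zero p = true -> poly_eval p = 0.
Proof. apply cancels_sound. Qed.

End PolyEval.

Lemma poly_of_qexpr_eval val a b q e :
  rep_expr q e -> poly_eval (atom_eval val a b) (poly_of_qexpr q) = eval val e.
Proof.
  revert e; induction q; destruct e; simpl; try tauto; intros Hr.
  - subst; destruct (Qeq_bool c 0) eqn:Hz; simpl.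
    + apply Qeq_bool_eq, Qeq_eqR in Hz; rewrite Q2R_zero in Hz; rewrite Hz; ring.
    + ring.
  - subst; simpl; rewrite Q2R_one; ring.
  - destruct Hr; rewrite poly_eval_app; f_equal; auto.
  - destruct Hr; rewrite poly_eval_mul; f_equal; auto.
Qed.

Lemma poly_of_qlin_eval val a lq l :
  rep_lin lq l -> poly_eval (atom_eval val a a) (poly_of_qlin lq) = lin_eval val a l.
Proof.
  induction 1 as [|[e1 s1] [e2 s2] lq l [He Hs] _ IH]; simpl in *; subst; auto.
  rewrite poly_eval_app, poly_eval_mul, IH, (poly_of_qexpr_eval _ _ _ _ _ He).
  simpl; rewrite Q2R_one; ring.
Qed.

Lemma lin_zero_of_check lq l :
  rep_lin lq l -> poly_is_zero (poly_of_qlin lq) = true ->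
  forall val a, lin_eval val a l = 0.
Proof.
  intros Hr Hz val a.
  rewrite <- (poly_of_qlin_eval val a _ _ Hr); apply poly_is_zero_sound, Hz.
Qed.

Lemma lin_eq_of_check lq1 lq2 l1 l2 :
  rep_lin lq1 l1 -> rep_lin lq2 l2 ->
  poly_is_zero (poly_of_qlin lq1 ++ poly_opp (poly_of_qlin lq2)) = true -> lin_eq l1 l2.
Proof.
  intros H1 H2 Hz val a.
  apply (poly_is_zero_sound (atom_eval val a a)) in Hz.
  rewrite poly_eval_app, poly_eval_opp, (poly_of_qlin_eval _ _ _ _ H1),
    (poly_of_qlin_eval _ _ _ _ H2) in Hz.
  lra.
Qed.

(** * Identities on T*E survive total differentiation *)

Lemma quad_eval_app val a b q1 q2 :
  quad_eval val a b (q1 ++ q2) = quad_eval val a b q1 + quad_eval val a b q2.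
Proof. induction q1 as [|[[e s] t] q IH]; simpl; [ring | rewrite IH; ring]. Qed.

Lemma quad_eval_scale val a b c q :
  quad_eval val a b (quad_scale c q) = eval val c * quad_eval val a b q.
Proof. induction q as [|[[e s] t] q IH]; simpl; [ring | rewrite IH; ring]. Qed.

Lemma quad_derm_app s q1 q2 : quad_derm s (q1 ++ q2) = quad_derm s q1 ++ quad_derm s q2.
Proof.
  unfold quad_derm; destruct s as [i j]; simpl.
  assert (Happ : forall d n q1 q2, Nat.iter n (quad_der d) (q1 ++ q2) =
                   Nat.iter n (quad_der d) q1 ++ Nat.iter n (quad_der d) q2).
  { intros d n; induction n; intros; simpl; [| rewrite IHn; apply flat_map_app]; auto. }
  rewrite !Happ; reflexivity.
Qed.

Lemma quad_derm_nil s : quad_derm s [] = [].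
Proof.
  assert (Hnil : forall d n, Nat.iter n (quad_der d) [] = []).
  { intros d n; induction n; simpl; [| rewrite IHn]; reflexivity. }
  unfold quad_derm; rewrite !Hnil; reflexivity.
Qed.

Definition laplace_jet (f : mi -> R) : Prop :=
  forall i j, f (S (S i), j) + f (i, S (S j)) = 0.
Definition on_E (val : evar -> R) : Prop := laplace_jet (fun s => val (VU s)).

Definition quad_eq (q1 q2 : quad) : Prop :=
  forall val a b, quad_eval val a b q1 = quad_eval val a b q2.
Definition quad_eq_TE (q1 q2 : quad) : Prop :=
  forall val a b, on_E val -> laplace_jet a -> laplace_jet b ->
    quad_eval val a b q1 = quad_eval val a b q2.

Definition lineV (val w : evar -> R) (x : R) : evar -> R := fun v => val v + x * w v.
Definition lineA (a w : mi -> R) (x : R) : mi -> R := fun s => a s + x * w s.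

(* The direction of the total derivative D_d at a point of the jet space. *)
Definition shiftV (d : dir) (val : evar -> R) : evar -> R :=
  fun v => match v with
  | VX => match d with DX => 1 | DY => 0 end
  | VY => match d with DX => 0 | DY => 1 end
  | VU s => val (VU (shift d s))
  end.
Definition shiftA (d : dir) (a : mi -> R) : mi -> R := fun s => a (shift d s).

Lemma lineV_0 val w : lineV val w 0 = val.
Proof. apply functional_extensionality; intro; unfold lineV; ring. Qed.

Lemma laplace_jet_line a w x : laplace_jet a -> laplace_jet w -> laplace_jet (lineA a w x).
Proof. intros Ha Hw i j; unfold lineA; specialize (Ha i j); specialize (Hw i j); nra. Qed.

Lemma on_E_line val w x : on_E val -> on_E w -> on_E (lineV val w x).
Proof. apply laplace_jet_line. Qed.

Lemma laplace_jet_shift d a : laplace_jet a -> laplace_jet (shiftA d a).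
Proof. intros Ha i j; destruct d; [apply (Ha (S i) j) | apply (Ha i (S j))]. Qed.

Lemma on_E_shift d val : on_E val -> on_E (shiftV d val).
Proof. intros Hv i j; destruct d; [apply (Hv (S i) j) | apply (Hv i (S j))]. Qed.

Lemma derivable_pt_lim_rw f x l l' :
  derivable_pt_lim f x l -> l = l' -> derivable_pt_lim f x l'.
Proof. intros D <-; exact D. Qed.

Lemma derivable_pt_lim_affine c k x : derivable_pt_lim (fun y => c + y * k) x k.
Proof.
  eapply derivable_pt_lim_rw.
  - apply derivable_pt_lim_plus; [apply derivable_pt_lim_const |].
    apply derivable_pt_lim_mult; [apply derivable_pt_lim_id | apply derivable_pt_lim_const].
  - unfold id; ring.
Qed.

Fixpoint eval_dir (val w : evar -> R) (x : R) (e : expr) : R :=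
  match e with
  | ECst _ => 0
  | EVar v => w v
  | EAdd a b => eval_dir val w x a + eval_dir val w x b
  | EMul a b => eval_dir val w x a * eval (lineV val w x) b +
                eval (lineV val w x) a * eval_dir val w x b
  end.

Lemma eval_line_derivable val w x e :
  derivable_pt_lim (fun y => eval (lineV val w y) e) x (eval_dir val w x e).
Proof.
  induction e; simpl.
  - apply derivable_pt_lim_const.
  - apply derivable_pt_lim_affine.
  - apply derivable_pt_lim_plus; auto.
  - apply derivable_pt_lim_mult; auto.
Qed.

Lemma eval_dir_shift val d e : eval_dir val (shiftV d val) 0 e = eval val (tder d e).
Proof.
  induction e; simpl; rewrite ?lineV_0; auto.
  - destruct v; reflexivity.
  - congruence.
  - congruence.
Qed.

Lemma quad_eval_line_derivable val a b d q :
  derivable_pt_lim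
    (fun x => quad_eval (lineV val (shiftV d val) x) (lineA a (shiftA d a) x)
                        (lineA b (shiftA d b) x) q)
    0 (quad_eval val a b (quad_der d q)).
Proof.
  induction q as [|[[e s] t] q IH]; simpl; [apply derivable_pt_lim_const |].
  eapply derivable_pt_lim_rw.
  - apply derivable_pt_lim_plus; [apply derivable_pt_lim_mult | apply IH].
    + apply eval_line_derivable.
    + apply derivable_pt_lim_minus; apply derivable_pt_lim_mult;
        apply derivable_pt_lim_affine.
  - rewrite eval_dir_shift, lineV_0; unfold lineA, shiftA; ring.
Qed.

(* The line through a point of T*E in the direction of D_d stays in T*E, and
   differentiating along it at 0 is the total derivative. *)
Lemma quad_eq_TE_der d q1 q2 :
  quad_eq_TE q1 q2 -> quad_eq_TE (quad_der d q1) (quad_der d q2).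
Proof.
  intros Heq val a b Hv Ha Hb.
  apply (uniqueness_limite
    (fun x => quad_eval (lineV val (shiftV d val) x) (lineA a (shiftA d a) x)
                        (lineA b (shiftA d b) x) q1) 0);
    [apply quad_eval_line_derivable |].
  eapply derivable_pt_lim_ext; [| apply quad_eval_line_derivable].
  intros x; symmetry; apply Heq;
    auto using on_E_line, on_E_shift, laplace_jet_line, laplace_jet_shift.
Qed.

Lemma quad_eq_TE_derm s q1 q2 :
  quad_eq_TE q1 q2 -> quad_eq_TE (quad_derm s q1) (quad_derm s q2).
Proof.
  intros Heq; unfold quad_derm.
  do 2 (apply (rel_iter quad_eq_TE); [intros; apply quad_eq_TE_der; assumption |]).
  exact Heq.
Qed.

(** * Restriction to T*E *)

(* [red_quad_TE] evaluates a quad at the unique prolongation to T*E of the values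
   of its internal coordinates. *)
Definition ext_jet (f : mi -> R) : mi -> R := fun s => red_sign s * f (red_mi s).
Definition ext_val (val : evar -> R) : evar -> R :=
  fun v => match v with VU s => ext_jet (fun s => val (VU s)) s | _ => val v end.

Lemma eval_red_expr val e : eval val (red_expr e) = eval (ext_val val) e.
Proof. induction e; simpl; try congruence. destruct v; reflexivity. Qed.

Lemma quad_eval_red val a b q :
  quad_eval val a b (red_quad_TE q) = quad_eval (ext_val val) (ext_jet a) (ext_jet b) q.
Proof.
  induction q as [|[[e s] t] q IH]; simpl; auto.
  rewrite IH, eval_red_expr; unfold ext_jet; ring.
Qed.

Lemma red_mi_SS i j : red_mi (S (S i), j) = red_mi (i, S (S j)).
Proof.
  unfold red_mi; cbn [fst snd].
  replace (S (S i)) with (i + 1 * 2)%nat by lia.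
  rewrite Nat.div_add, Nat.Div0.mod_add by lia; f_equal; lia.
Qed.

Lemma red_sign_SS i j : red_sign (S (S i), j) = - red_sign (i, S (S j)).
Proof.
  unfold red_sign; cbn [fst].
  replace (S (S i)) with (i + 1 * 2)%nat by lia.
  rewrite Nat.div_add, Nat.add_1_r, Nat.even_succ, <- Nat.negb_even by lia.
  destruct (Nat.even (i / 2)); simpl; ring.
Qed.

Lemma laplace_jet_ext f : laplace_jet (ext_jet f).
Proof. intros i j; unfold ext_jet; rewrite red_mi_SS, red_sign_SS; ring. Qed.

Lemma red_quad_TE_eq q1 q2 : quad_eq_TE q1 q2 -> quad_eq (red_quad_TE q1) (red_quad_TE q2).
Proof. intros Heq val a b; rewrite !quad_eval_red; apply Heq; apply laplace_jet_ext. Qed.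

Lemma quad_zero_TE_eq q1 q2 : quad_eq q1 q2 -> quad_zero_TE q1 -> quad_zero_TE q2.
Proof.
  intros Heq Hz val a b; rewrite quad_eval_red, <- Heq, <- quad_eval_red; apply Hz.
Qed.

(** * The choice of ∇ does not matter *)

Definition mi_eq_dec : forall s t : mi, {s = t} + {s <> t}.
Proof. decide equality; apply Nat.eq_dec. Defined.

Definition key_eq_dec : forall k l : mi * mi, {k = l} + {k <> l}.
Proof. decide equality; apply mi_eq_dec. Defined.

Arguments mi_eq_dec : simpl never.
Arguments key_eq_dec : simpl never.

(* The total coefficient of ∇ in front of D_s(F) D_t(p). *)
Fixpoint nabla_coef (N : bidiff) (k : mi * mi) (val : evar -> R) : R :=
  match N with
  | [] => 0
  | (c, s, t) :: N => (if key_eq_dec (s, t) k then eval val c else 0) + nabla_coef N k val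
  end.

(* A jet [w] with D_s(F)(w) = 1 if s = s0 and 0 otherwise. *)
Fixpoint delta_jet (s0 : mi) (m n : nat) {struct m} : R :=
  match m with
  | S (S m') => (if mi_eq_dec (m', n) s0 then 1 else 0) - delta_jet s0 m' (S (S n))
  | _ => 0
  end.
Definition delta_val (s0 : mi) (v : evar) : R :=
  match v with VU (m, n) => delta_jet s0 m n | _ => 0 end.

Definition indicator (t0 : mi) : mi -> R := fun t => if mi_eq_dec t t0 then 1 else 0.

Lemma tderm_lapF i j :
  tderm (i, j) lapF = EAdd (EVar (VU (S (S i), j))) (EVar (VU (i, S (S j)))).
Proof.
  unfold tderm; cbn [fst snd].
  assert (Hy : Nat.iter j (tder DY) lapF =
                EAdd (EVar (VU (2, j)%nat)) (EVar (VU (0, S (S j))%nat)))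
    by (induction j; simpl; [| rewrite IHj]; reflexivity).
  rewrite Hy; induction i; simpl; [| rewrite IHi]; reflexivity.
Qed.

Lemma nabla_Fp_delta N val s0 t0 x : on_E val ->
  lin_eval (lineV val (delta_val s0) x) (indicator t0) (nabla_Fp N lapF) =
  x * nabla_coef N (s0, t0) (lineV val (delta_val s0) x).
Proof.
  intros Hv; induction N as [|[[c [i j]] t] N IH]; simpl; [ring |].
  rewrite IH, tderm_lapF; simpl; unfold lineV at 2 3; simpl.
  specialize (Hv i j); simpl in Hv.
  unfold indicator; case key_eq_dec; [intros Hk; injection Hk as <- <- | intros Hk];
    repeat match goal with |- context [mi_eq_dec ?u ?v] => destruct (mi_eq_dec u v) end;
    subst; try congruence; nra.
Qed.

Lemma nabla_coef_derivable N k val w :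
  exists l, derivable_pt_lim (fun x => nabla_coef N k (lineV val w x)) 0 l.
Proof.
  induction N as [|[[c s] t] N [l IH]]; simpl.
  - exists 0; apply derivable_pt_lim_const.
  - destruct (key_eq_dec (s, t) k); eexists; apply derivable_pt_lim_plus; try apply IH.
    + apply eval_line_derivable.
    + apply derivable_pt_lim_const.
Qed.

(* If x * g(x) = 0 for all x, then g(0) = 0: differentiate at 0. *)
Lemma nabla_coef_eq_on_E N1 N2 :
  lin_eq (nabla_Fp N1 lapF) (nabla_Fp N2 lapF) ->
  forall k val, on_E val -> nabla_coef N1 k val = nabla_coef N2 k val.
Proof.
  intros Heq [s0 t0] val Hv.
  set (g x := nabla_coef N1 (s0, t0) (lineV val (delta_val s0) x) -
              nabla_coef N2 (s0, t0) (lineV val (delta_val s0) x)).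
  destruct (nabla_coef_derivable N1 (s0, t0) val (delta_val s0)) as [l1 D1].
  destruct (nabla_coef_derivable N2 (s0, t0) val (delta_val s0)) as [l2 D2].
  assert (Dxg : derivable_pt_lim (fun x => x * g x) 0 (1 * g 0 + 0 * (l1 - l2)))
    by (apply derivable_pt_lim_mult; [apply derivable_pt_lim_id |];
        apply derivable_pt_lim_minus; assumption).
  assert (Hxg : forall x, x * g x = 0).
  { intros x; unfold g; rewrite Rmult_minus_distr_l, <- !nabla_Fp_delta by exact Hv.
    rewrite Heq; ring. }
  apply derivable_pt_lim_ext with (g := fun _ => 0) in Dxg; [| exact Hxg].
  pose proof (uniqueness_limite _ _ _ _ Dxg (derivable_pt_lim_const 0 0)) as Hg0.
  unfold g in Hg0; rewrite lineV_0 in Hg0; lra.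
Qed.

Definition nabla_adj1 (N : bidiff) : quad :=
  flat_map (fun '(c, s, t) =>
    quad_scale (ECst (sgn s)) (quad_derm s [(c, (0, 0)%nat, t)])) N.

Lemma nabla_adj1_cons c s t N :
  nabla_adj1 ((c, s, t) :: N) =
  quad_scale (ECst (sgn s)) (quad_derm s [(c, (0, 0)%nat, t)]) ++ nabla_adj1 N.
Proof. reflexivity. Qed.

Definition nabla_part (N : bidiff) (k : mi * mi) : quad :=
  flat_map (fun '(c, s, t) =>
    if key_eq_dec (s, t) k then [(c, (0, 0)%nat, snd k)] else []) N.

Lemma nabla_part_cons c s t N k :
  nabla_part ((c, s, t) :: N) k =
  (if key_eq_dec (s, t) k then [(c, (0, 0)%nat, snd k)] else []) ++ nabla_part N k.
Proof. reflexivity. Qed.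

Lemma quad_eval_nabla_part N k val a b :
  quad_eval val a b (nabla_part N k) =
  nabla_coef N k val * (a (0, 0)%nat * b (snd k) - a (snd k) * b (0, 0)%nat).
Proof.
  induction N as [|[[c s] t] N IH]; simpl; [ring |].
  rewrite quad_eval_app, IH; destruct (key_eq_dec (s, t) k); simpl; ring.
Qed.

Fixpoint sum_over (L : list (mi * mi)) (f : mi * mi -> R) : R :=
  match L with [] => 0 | k :: L => f k + sum_over L f end.

Lemma sum_over_ext L f g : (forall k, f k = g k) -> sum_over L f = sum_over L g.
Proof. intros Hfg; induction L; simpl; congruence. Qed.

Lemma sum_over_plus L f g : sum_over L (fun k => f k + g k) = sum_over L f + sum_over L g.
Proof. induction L; simpl; [ring | rewrite IHL; ring]. Qed.

Lemma sum_over_zero L f : (forall k, In k L -> f k = 0) -> sum_over L f = 0.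
Proof. induction L; simpl; intros Hz; auto. rewrite Hz, IHL; auto; ring. Qed.

Lemma sum_over_single L f k0 :
  NoDup L -> In k0 L -> (forall k, k <> k0 -> f k = 0) -> sum_over L f = f k0.
Proof.
  induction L as [|k L IH]; simpl; intros Hnd Hin Hz; [contradiction |].
  inversion Hnd as [|? ? Hk Hnd']; subst.
  destruct Hin as [<- | Hin].
  - rewrite sum_over_zero; [ring |]. intros k' Hk'; apply Hz; intros ->; contradiction.
  - assert (Hne : k <> k0) by (intros ->; contradiction).
    rewrite (Hz k Hne), (IH Hnd' Hin Hz); ring.
Qed.

Lemma quad_eval_nabla_adj1 val a b N L :
  NoDup L -> (forall c s t, In (c, s, t) N -> In (s, t) L) ->
  quad_eval val a b (nabla_adj1 N) =
  sum_over L (fun k =>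
    sgn (fst k) * quad_eval val a b (quad_derm (fst k) (nabla_part N k))).
Proof.
  intros Hnd; induction N as [|[[c s] t] N IH]; intros Hin.
  - symmetry; apply sum_over_zero; intros k _; rewrite quad_derm_nil; simpl; ring.
  - rewrite nabla_adj1_cons, quad_eval_app, quad_eval_scale, IH
      by (intros; eapply Hin; right; eassumption).
    symmetry; rewrite (sum_over_ext L _ (fun k =>
      sgn (fst k) * quad_eval val a b (quad_derm (fst k)
        (if key_eq_dec (s, t) k then [(c, (0, 0)%nat, snd k)] else [])) +
      sgn (fst k) * quad_eval val a b (quad_derm (fst k) (nabla_part N k))))
      by (intros k; cbv beta; rewrite nabla_part_cons, quad_derm_app, quad_eval_app,
            Rmult_plus_distr_l; reflexivity).
    rewrite sum_over_plus, (sum_over_single L _ (s, t)); simpl.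
    + destruct (key_eq_dec (s, t) (s, t)); [reflexivity | contradiction].
    + assumption.
    + eapply Hin; left; reflexivity.
    + intros k Hk; destruct (key_eq_dec (s, t) k); [congruence |].
      rewrite quad_derm_nil; simpl; ring.
Qed.

Definition keys (N : bidiff) : list (mi * mi) := map (fun '(c, s, t) => (s, t)) N.

Lemma in_keys N c s t : In (c, s, t) N -> In (s, t) (keys N).
Proof. exact (in_map (fun '(c, s, t) => (s, t)) N (c, s, t)). Qed.

Lemma nabla_adj1_eq_TE N1 N2 :
  lin_eq (nabla_Fp N1 lapF) (nabla_Fp N2 lapF) ->
  quad_eq_TE (nabla_adj1 N1) (nabla_adj1 N2).
Proof.
  intros Heq val a b Hv Ha Hb.
  set (L := nodup key_eq_dec (keys N1 ++ keys N2)).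
  rewrite !(quad_eval_nabla_adj1 val a b _ L) by
    (apply NoDup_nodup || (intros; apply nodup_In, in_or_app; eauto using in_keys)).
  apply sum_over_ext; intros k; f_equal.
  apply quad_eq_TE_derm; auto.
  intros val' a' b' Hv' _ _; rewrite !quad_eval_nabla_part, (nabla_coef_eq_on_E N1 N2);
    auto.
Qed.

Lemma Hp_eq N1 N2 :
  lin_eq (nabla_Fp N1 lapF) (nabla_Fp N2 lapF) ->
  quad_eq (Hp N1) (Hp N2).
Proof.
  intros Heq val a b; unfold Hp; fold (nabla_adj1 N1) (nabla_adj1 N2).
  rewrite !quad_eval_scale; f_equal.
  apply red_quad_TE_eq, nabla_adj1_eq_TE, Heq.
Qed.

Lemma ev_apply_eq H N1 N2 G :
  quad_eq (Hp N1) (Hp N2) -> quad_eq (ev_apply H N1 G) (ev_apply H N2 G).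
Proof.
  intros Heq val a b; unfold ev_apply.
  induction (red_lin_TE G) as [|[e s] l IH]; simpl; [reflexivity |].
  rewrite !quad_eval_app, IH, !quad_eval_scale; do 3 f_equal.
  apply red_quad_TE_eq, quad_eq_TE_derm; intros ? ? ? _ _ _; apply Heq.
Qed.

Lemma schouten_eq H H' N1 N1' N2 N2' :
  nabla_ok H N1 -> nabla_ok H N2 -> nabla_ok H' N1' -> nabla_ok H' N2' ->
  quad_eq (schouten H H' N1 N1') (schouten H H' N2 N2').
Proof.
  intros A1 A2 B1 B2 val a b; unfold schouten; rewrite !quad_eval_app.
  f_equal; apply ev_apply_eq, Hp_eq; intros val' a'.
  - rewrite <- A1, <- A2; reflexivity.
  - rewrite <- B1, <- B2; reflexivity.
Qed.

Lemma bracket_zero_of H H' N N' :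
  nabla_ok H N -> nabla_ok H' N' -> quad_zero_TE (schouten H H' N N') -> bracket_zero H H'.
Proof.
  intros HN HN' Hz; split; [eauto | split; [eauto |]].
  intros M M' HM HM'.
  apply (quad_zero_TE_eq _ _ (schouten_eq H H' N N' M M' HN HM HN' HM')), Hz.
Qed.

Lemma bracket_nonzero_of H H' N N' :
  nabla_ok H N -> nabla_ok H' N' -> ~ quad_zero_TE (schouten H H' N N') ->
  bracket_nonzero H H'.
Proof.
  intros HN HN' Hnz; split; [eauto | split; [eauto |]].
  intros M M' HM HM' Hz; apply Hnz.
  apply (quad_zero_TE_eq _ _ (schouten_eq H H' M M' N N' HM HN HM' HN')), Hz.
Qed.

(** * The bivectors B_0, ..., B_8 *)

Definition qx : qexpr := QV VX.
Definition qy : qexpr := QV VY.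
Definition qc (c : Q) : qexpr := QC c.
Definition qux : qexpr := QV (VU (1, 0)%nat).
Definition quy : qexpr := QV (VU (0, 1)%nat).
Definition quxy : qexpr := QV (VU (1, 1)%nat).
Definition quyy : qexpr := QV (VU (0, 2)%nat).

Definition qB (n : nat) : qop :=
  match n with
  | 0 => [(qc 1, (0, 0))]
  | 1 => [(qc 1, (0, 2))]
  | 2 => [(qc 1, (1, 1))]
  | 3 => [(qc 1, (0, 1)); (QM (qc 2) qx, (1, 1)); (QM (qc 2) qy, (0, 2))]
  | 4 => [(qc 1, (1, 0)); (QM (qc 2) qy, (1, 1)); (QM (qc (-2)) qx, (0, 2))]
  | 5 => [(quyy, (0, 1)); (QM (qc (-1)) quxy, (1, 0));
          (QM (qc 2) quy, (0, 2)); (QM (qc (-2)) qux, (1, 1))]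
  | 6 => [(quyy, (1, 0)); (quxy, (0, 1));
          (QM (qc 2) quy, (1, 1)); (QM (qc 2) qux, (0, 2))]
  | 7 => [(QA (QA quy (QM qx quxy)) (QM qy quyy), (1, 0));
          (QA (QA qux (QM qy quxy)) (QM (QM (qc (-1)) qx) quyy), (0, 1));
          (QM (qc 2) (QA (QM qy qux) (QM (QM (qc (-1)) qx) quy)), (0, 2));
          (QM (qc 2) (QA (QM qx qux) (QM qy quy)), (1, 1))]
  | 8 => [(QM (qc (-1)) (QA (QA qux (QM qy quxy)) (QM (QM (qc (-1)) qx) quyy)), (1, 0));
          (QA (QA quy (QM qx quxy)) (QM qy quyy), (0, 1));
          (QM (qc 2) (QA (QM qx qux) (QM qy quy)), (0, 2));
          (QM (qc (-2)) (QA (QM qy qux) (QM (QM (qc (-1)) qx) quy)), (1, 1))]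
  | _ => []
  end%nat.

Lemma rep_B i : rep_lin (qB i) (B i).
Proof.
  do 9 (destruct i as [|i];
        [simpl; repeat constructor; simpl; repeat split; unfold Q2R; simpl; lra |]).
  constructor.
Qed.

Definition qnabla (i : nat) : qbidiff :=
  match i with
  | 5 => [(qc (-1), (1,1), (1,0)); (qc (-2), (1,0), (1,1)); (qc 1, (0,2), (0,1));
          (qc (-1), (0,1), (2,0)); (qc 3, (0,1), (0,2)); (qc (-2), (0,0), (2,1));
          (qc 2, (0,0), (0,3))]
  | 6 => [(qc 1, (1,1), (0,1)); (qc 2, (1,0), (0,2)); (qc 1, (0,2), (1,0));
          (qc 4, (0,1), (1,1)); (qc 4, (0,0), (1,2))]
  | 7 => [(qc 1, (1,0), (0,1)); (qy, (1,1), (0,1)); (QM (qc 2) qy, (1,0), (0,2));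
          (qx, (1,1), (1,0)); (QM (qc 2) qx, (1,0), (1,1)); (qc 3, (0,1), (1,0));
          (qc 6, (0,0), (1,1)); (qy, (0,2), (1,0)); (QM (qc 4) qy, (0,1), (1,1));
          (QM (qc 4) qy, (0,0), (1,2)); (QM (qc (-1)) qx, (0,2), (0,1));
          (qx, (0,1), (2,0)); (QM (qc (-3)) qx, (0,1), (0,2));
          (QM (qc 2) qx, (0,0), (2,1)); (QM (qc (-2)) qx, (0,0), (0,3))]
  | 8 => [(qc (-1), (1,0), (1,0)); (QM (qc (-1)) qy, (1,1), (1,0));
          (QM (qc (-2)) qy, (1,0), (1,1)); (qx, (1,1), (0,1)); (QM (qc 2) qx, (1,0), (0,2));
          (qc 3, (0,1), (0,1)); (qc (-1), (0,0), (2,0)); (qc 5, (0,0), (0,2));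
          (qy, (0,2), (0,1)); (QM (qc (-1)) qy, (0,1), (2,0)); (QM (qc 3) qy, (0,1), (0,2));
          (QM (qc (-2)) qy, (0,0), (2,1)); (QM (qc 2) qy, (0,0), (0,3));
          (qx, (0,2), (1,0)); (QM (qc 4) qx, (0,1), (1,1)); (QM (qc 4) qx, (0,0), (1,2))]
  | _ => []
  end%nat.

Fixpoint expr_of_q (q : qexpr) : expr :=
  match q with
  | QC c => ECst (Q2R c)
  | QV v => EVar v
  | QA a b => EAdd (expr_of_q a) (expr_of_q b)
  | QM a b => EMul (expr_of_q a) (expr_of_q b)
  end.
Definition nabla_of_q (N : qbidiff) : bidiff :=
  map (fun '(c, s, t) => (expr_of_q c, s, t)) N.

Lemma rep_nabla_of_q N : rep_quad N (nabla_of_q N).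
Proof.
  assert (Hrep : forall q, rep_expr q (expr_of_q q)) by (induction q; simpl; auto).
  induction N as [|[[c s] t] N IH]; constructor; simpl; auto.
Qed.

Ltac check_upto_8 i := do 9 (destruct i as [|i]; [vm_compute; reflexivity |]); lia.

Lemma nabla_B_ok i : (i <= 8)%nat -> nabla_ok (B i) (nabla_of_q (qnabla i)).
Proof.
  intros Hi; eapply lin_eq_of_check.
  - apply rep_lin_sub; apply rep_op_app || apply rep_op_adj_app;
      auto using rep_ellF_lapF, rep_Hu, rep_B, rep_op_app, rep_pvar.
  - apply rep_nabla_Fp_lapF, rep_nabla_of_q.
  - check_upto_8 i.
Qed.

Lemma B_variational i : (i <= 8)%nat -> variational_bivector (B i).
Proof.
  intros Hi; split.
  - intros val a; eapply lin_zero_of_check.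
    + apply rep_red_lin_TE, rep_op_app; [apply rep_ellF_lapF | apply rep_Hu, rep_B].
    + check_upto_8 i.
  - eapply lin_eq_of_check.
    + apply rep_red_lin_E, rep_op_adj_app; [apply rep_B |].
      apply rep_op_adj_app; [apply rep_ellF_lapF | apply rep_pvar].
    + apply rep_red_lin_E, rep_op_app; [apply rep_ellF_lapF |].
      apply rep_op_app; [apply rep_B | apply rep_pvar].
    + check_upto_8 i.
Qed.

Lemma schouten_B_self_nil i : (i <= 4)%nat ->
  schouten (B i) (B i) (nabla_of_q (qnabla i)) (nabla_of_q (qnabla i)) = [].
Proof. intros Hi; do 5 (destruct i as [|i]; [vm_compute; reflexivity |]); lia. Qed.

Fixpoint qeval (val : evar -> Q) (q : qexpr) : Q :=
  match q with
  | QC c => c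
  | QV v => val v
  | QA a b => Qplus' (qeval val a) (qeval val b)
  | QM a b => Qmult' (qeval val a) (qeval val b)
  end.

Fixpoint qquad_eval (val : evar -> Q) (a b : mi -> Q) (q : qquad) : Q :=
  match q with
  | [] => 0
  | (e, s, t) :: q =>
      Qplus' (Qmult' (qeval val e) (Qminus' (Qmult' (a s) (b t)) (Qmult' (a t) (b s))))
             (qquad_eval val a b q)
  end.

Lemma rep_eval_Q2R val q e :
  rep_expr q e -> eval (fun v => Q2R (val v)) e = Q2R (qeval val q).
Proof.
  revert e; induction q; destruct e; simpl; try tauto; intros Hr.
  - congruence.
  - congruence.
  - destruct Hr; unfold Qplus'; rewrite Q2R_red, Q2R_plus; f_equal; auto.
  - destruct Hr; unfold Qmult'; rewrite Q2R_red, Q2R_mult; f_equal; auto.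
Qed.

Lemma rep_quad_eval_Q2R val a b lq l : rep_quad lq l ->
  quad_eval (fun v => Q2R (val v)) (fun s => Q2R (a s)) (fun s => Q2R (b s)) l =
  Q2R (qquad_eval val a b lq).
Proof.
  induction 1 as [|[[e1 s1] t1] [[e2 s2] t2] lq l [He [Hs Ht]] _ IH];
    simpl in *; subst; [symmetry; apply Q2R_zero |].
  unfold Qplus', Qmult', Qminus'.
  repeat first [rewrite Q2R_red | rewrite Q2R_plus | rewrite Q2R_mult | rewrite Q2R_minus].
  rewrite (rep_eval_Q2R _ _ _ He), IH; reflexivity.
Qed.

Definition unit_val (u : mi) (v : evar) : Q := if evar_eq_dec v (VU u) then 1 else 0.
Definition unit_jet (s : mi) (t : mi) : Q := if mi_eq_dec t s then 1 else 0.

(* [[B_i, B_j]] on T*E is nonzero at the point where u_σ = 1, a = e_s, b = e_t and all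
   other internal coordinates vanish, for (σ, s, t) = [bracket_witness i j]. *)
Definition bracket_witness (i j : nat) : mi * mi * mi :=
  match i, j with
  | 5, 5 => ((0,3), (0,2), (0,1))
  | 5, 6 => ((0,3), (0,2), (1,0))
  | 5, 7 => ((0,2), (0,2), (1,0))
  | 5, 8 => ((0,2), (1,1), (1,0))
  | 6, 6 => ((0,3), (1,1), (1,0))
  | 6, 7 => ((0,2), (1,1), (1,0))
  | 6, 8 => ((0,2), (0,2), (1,0))
  | 7, 7 => ((0,1), (1,1), (1,0))
  | 7, 8 => ((0,1), (0,2), (1,0))
  | 8, 8 => ((1,0), (0,2), (1,0))
  | _, _ => ((0,0), (0,0), (0,0))
  end%nat.

Definition bracket_value_at_witness (i j : nat) : Q :=
  let '(u, s, t) := bracket_witness i j in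
  qquad_eval (unit_val u) (unit_jet s) (unit_jet t)
    (qred_quad_TE (qschouten (qB i) (qB j) (qnabla i) (qnabla j))).

Lemma schouten_B_nonzero i j : (5 <= i)%nat -> (i <= j)%nat -> (j <= 8)%nat ->
  ~ quad_zero_TE (schouten (B i) (B j) (nabla_of_q (qnabla i)) (nabla_of_q (qnabla j))).
Proof.
  intros H5i Hij Hj8 Hz.
  assert (Hval : Qeq_bool (bracket_value_at_witness i j) 0 = false).
  { do 9 (destruct i as [|i]; [try lia;
      do 9 (destruct j as [|j]; [try lia; vm_compute; reflexivity |]); lia |]).
    lia. }
  unfold bracket_value_at_witness in Hval; destruct (bracket_witness i j) as [[u s] t].
  specialize (Hz (fun v => Q2R (unit_val u v)) (fun x => Q2R (unit_jet s x))
                 (fun x => Q2R (unit_jet t x))).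
  rewrite (rep_quad_eval_Q2R _ _ _ _ _ (rep_red_quad_TE _ _
             (rep_schouten _ _ _ _ _ _ _ _ (rep_B i) (rep_B j)
                (rep_nabla_of_q _) (rep_nabla_of_q _)))), <- Q2R_zero in Hz.
  apply eqR_Qeq, Qeq_bool_iff in Hz; congruence.
Qed.

Theorem mainTheorem4 :
  (forall i, (i <= 8)%nat -> variational_bivector (B i)) /\
  (forall i, (i <= 4)%nat -> poisson (B i)) /\
  (forall i, (5 <= i <= 8)%nat -> ~ poisson (B i)) /\
  (forall i j, (5 <= i)%nat -> (i <= j)%nat -> (j <= 8)%nat ->
     bracket_nonzero (B i) (B j)).
Proof.
  split; [exact B_variational |]; split; [| split].
  - intros i Hi; split; [apply B_variational; lia |].
    apply (bracket_zero_of _ _ (nabla_of_q (qnabla i)) (nabla_of_q (qnabla i)));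
      try (apply nabla_B_ok; lia).
    rewrite schouten_B_self_nil by exact Hi; intros val a b; reflexivity.
  - intros i Hi [_ [_ [_ Hzero]]].
    apply (schouten_B_nonzero i i); try lia.
    apply Hzero; apply nabla_B_ok; lia.
  - intros i j H5i Hij Hj8.
    apply (bracket_nonzero_of _ _ (nabla_of_q (qnabla i)) (nabla_of_q (qnabla j)));
      try (apply nabla_B_ok; lia).
    apply schouten_B_nonzero; assumption.
Qed.
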